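(* Fix $\varepsilon>0$ and any online sequence of service requests. Whenever the algorithm c-REShare$(\varepsilon)$ (defined in the context) handles the arrival of a request $r$, placing all its jobs in a node $i^*$ at layer $\ell^*(r)$ and allocating the VM capabilities $\mu_{b}$ as it prescribes, the resulting deployment of request $r$ is feasible.
   Context: Network: an undirected layered graph whose vertices (nodes) are datacenters. A node is at layer $\ell\ge 0$ if its distance in links from the closest leaf is $\ell$ (leaves are at layer $0$). Every node can host arbitrarily many virtual machines (VMs). Each VM $b$ runs exactly one virtual network function (VNF) $v$ from a finite set $\mathcal V$, has maximum computing capability $\bar\mu>0$ and an allocated capability $\mu_b\le\bar\mu$. Each VNF $v$ has computing complexity $\theta_v\in(0,1]$. Requests: requests $r$ arrive online; each has a set $\mathcal V_r\subseteq\mathcal V$ of VNFs, an arrival time $a_r$, a duration $\tau_r$, a traffic load $\lambda_r\ge\lambda_{\min}$ where $\lambda_{\min}=\inf_r\lambda_r>0$ is known in advance, an end-to-end delay target $D_r$, and an arrival leaf. For $v\in\mathcal V_r$ the pair $(r,v)$ is a job; all jobs of $r$ arrive at $a_r$ and are removed at $a_r+\tau_r$. For a VM $b$ running $v$, $\Lambda(b)$ is the total load $\sum\lambda_{r'}$ of jobs $(r',v)$ assigned to $b$, and every job on $b$ experiences processing latency $1/(\mu_b-\theta_v\Lambda(b))$ (which requires $\mu_b>\theta_v\Lambda(b)$). The forwarding latency from a leaf to a node at layer $\ell$ is $d_\ell$, with $d_{\ell+1}>d_\ell$. The latency of request $r$ is the maximum of $d_\ell$ over the layers $\ell$ hosting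 its jobs plus the sum over its jobs of their processing latencies. Fair delay allocation: $M_{r,v}=1/(\bar\mu-\theta_v\lambda_r)$; $\ell^*(r)$ is the highest layer $\ell$ with $d_\ell+\sum_{v\in\mathcal V_r}M_{r,v}\le D_r$ (assumed to exist); $D_r^v=\frac{M_{r,v}}{\sum_{u\in\mathcal V_r}M_{r,u}}\,(D_r-d_{\ell^*(r)})$. A deployment of $r$ is feasible if each job $(r,v)$ is on a VM $b$ running $v$ with $\mu_b\le\bar\mu$ and $1/(\mu_b-\theta_v\Lambda(b))\le D_r^v$, and the latency of $r$ is at most $D_r$. Latency ranges: for $\varepsilon>0$, $L_0=\big[\frac{1}{\bar\mu-\lambda_{\min}},\frac{1}{\bar\mu-\lambda_{\min}(1+\varepsilon)}\big]$ and $L_j=\big(\frac{1}{\bar\mu-\lambda_{\min}(1+\varepsilon)^j},\frac{1}{\bar\mu-\lambda_{\min}(1+\varepsilon)^{j+1}}\big]$ for $j\ge1$, over the indices $j$ with $\lambda_{\min}(1+\varepsilon)^{j+1}<\bar\mu$. A job $(r,v)$ is associated with $L_j$ if $D_r^v\in L_j$ (every fair delay allocation is presumed to lie in some range). Algorithm c-REShare$(\varepsilon)$: on arrival of $r$, compute $\ell^*(r)$ and choose a node $i^*$ at layer $\ell^*(r)$ (e.g., the least loaded one). For each $v\in\mathcal V_r$, with $j$ such that $D_r^v\in L_j$: a VM $b$ in $i^*$ running $v$ and hosting jobs associated with $L_j$ is viable if $\frac{1}{\bar\mu-\theta_v(\Lambda(b)+\lambda_r)}\le D_r^v$ and $\frac{1}{\bar\mu-\theta_v(\Lambda(b)+\lambda_r)}\le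 D_{r'}^v$ for every job $(r',v)$ already on $b$. If viable VMs exist, place $(r,v)$ on the viable VM with the largest $\Lambda(b)$ and set its capability to $\theta_v\Lambda(b)+1/\min_{(r',v)\in b}D_{r'}^v$ (with $\Lambda(b)$ and the minimum computed including the new job); otherwise open a new VM in $i^*$ running $v$, place $(r,v)$ on it and set its capability to $\theta_v\lambda_r+1/D_r^v$. On departure of $r$, remove each $(r,v)$ from its VM $b$ and reset $\mu_b=\theta_v\Lambda(b)+1/\min_{(r',v)\in b}D_{r'}^v$ over the remaining jobs. *)

(* Model of the network, the requests and the
   algorithm c-REShare(eps) as a (nondeterministic) transition relation. *)
From Stdlib Require List.
From HB Require Import structures.
From mathcomp Require Import all_boot all_order all_algebra.
Set Implicit Arguments. Unset Strict Implicit. Unset Printing Implicit Defensive.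
Import Order.TTheory GRing.Theory Num.Theory.
Local Open Scope ring_scope.

Section Model.
Variables (R : realFieldType) (V node : finType).

(* A request: VNF set, arrival time, duration, load, delay target, arrival leaf. *)
Record request := Request {
  rV : {set V}; ra : R; rtau : R; rlam : R; rD : R; rleaf : node }.

(* A VM: hosting node, the VNF it runs, allocated capability, and the
   identifiers k of the requests whose job (k, vm_vnf) it hosts. *)
Record vm := VM { vm_node : node; vm_vnf : V; vm_mu : R; vm_jobs : seq nat }.

Definition state := seq vm.

Inductive event := Arr of nat | Dep of nat.

Variables (theta : V -> R) (mubar eps lmin : R) (d : nat -> R)
          (layer : node -> nat) (req : nat -> request).

Definition M (k : nat) (v : V) : R := 1 / (mubar - theta v * rlam (req k)).
Definition Msum (k : nat) : R := \sum_(v in rV (req k)) M k v.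
Definition lstar_ok (k l : nat) : bool := d l + Msum k <= rD (req k).
Definition lstar (k : nat) : nat :=
  (\max_(i : node | lstar_ok k (layer i)) layer i)%N.
Definition Dfair (k : nat) (v : V) : R :=
  M k v / Msum k * (rD (req k) - d (lstar k)).

Definition valid_index (j : nat) : bool := lmin * (1 + eps) ^+ j.+1 < mubar.
Definition in_range (j : nat) (x : R) : bool :=
  valid_index j &&
  (if j == 0%N then
     (1 / (mubar - lmin) <= x) && (x <= 1 / (mubar - lmin * (1 + eps)))
   else
     (1 / (mubar - lmin * (1 + eps) ^+ j) < x) &&
     (x <= 1 / (mubar - lmin * (1 + eps) ^+ j.+1))).

Definition Lambda (b : vm) : R := \sum_(k <- vm_jobs b) rlam (req k).
Definition minD (js : seq nat) (v : V) : R :=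
  match js with
  | [::] => 0
  | k :: ks => foldr (fun k' m => Num.min (Dfair k' v) m) (Dfair k v) ks
  end.
Definition alloc (b : vm) : R :=
  theta (vm_vnf b) * Lambda b + 1 / minD (vm_jobs b) (vm_vnf b).

Definition viable (i : node) (k : nat) (v : V) (b : vm) : Prop :=
  let den := mubar - theta v * (Lambda b + rlam (req k)) in
  [/\ vm_node b = i, vm_vnf b = v,
      (exists j, in_range j (Dfair k v) /\
                 forall k', k' \in vm_jobs b -> in_range j (Dfair k' v)),
      0 < den &
      (1 / den <= Dfair k v /\
       forall k', k' \in vm_jobs b -> 1 / den <= Dfair k' v)].

Definition add_job (b : vm) (k : nat) : vm :=
  let js := k :: vm_jobs b in
  VM (vm_node b) (vm_vnf b) (alloc (VM (vm_node b) (vm_vnf b) 0 js)) js.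

Definition place (s : state) (k : nat) (v : V) (i : node) (s' : state) : Prop :=
  (exists s1 b s2, s = s1 ++ b :: s2 /\ viable i k v b /\
     (forall b', List.In b' s -> viable i k v b' -> Lambda b' <= Lambda b) /\
     s' = s1 ++ add_job b k :: s2)
  \/
  ((forall b, List.In b s -> ~ viable i k v b) /\
   s' = rcons s (VM i v (theta v * rlam (req k) + 1 / Dfair k v) [:: k])).

Fixpoint place_all (s : state) (k : nat) (i : node) (vs : seq V) (s' : state)
  : Prop :=
  match vs with
  | [::] => s' = s
  | v :: vs' => exists s1, place s k v i s1 /\ place_all s1 k i vs' s'
  end.

Definition arrive (s : state) (k : nat) (s' : state) : Prop :=
  exists (i : node) (vs : seq V),
    layer i = lstar k /\ perm_eq vs (enum (rV (req k))) /\ place_all s k i vs s'.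

Definition remove_job (k : nat) (b : vm) : vm :=
  let js := [seq k' <- vm_jobs b | k' != k] in
  VM (vm_node b) (vm_vnf b)
     (if k \in vm_jobs b then alloc (VM (vm_node b) (vm_vnf b) 0 js) else vm_mu b)
     js.
Definition depart (s : state) (k : nat) : state :=
  [seq b <- map (remove_job k) s | ~~ nilp (vm_jobs b)].

Definition step (s : state) (e : event) (s' : state) : Prop :=
  match e with
  | Arr k => arrive s k s'
  | Dep k => s' = depart s k
  end.

Fixpoint run (s : state) (es : seq event) (s' : state) : Prop :=
  match es with
  | [::] => s' = s
  | e :: es' => exists s1, step s e s1 /\ run s1 es' s'
  end.

Definition etime (e : event) : R :=
  match e with Arr k => ra (req k) | Dep k => ra (req k) + rtau (req k) end.
Definition is_arr (k : nat) (e : event) : bool :=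
  if e is Arr k' then k' == k else false.
Definition is_dep (k : nat) (e : event) : bool :=
  if e is Dep k' then k' == k else false.
Definition valid_schedule (es : seq event) : Prop :=
  sorted (fun e1 e2 => etime e1 <= etime e2) es /\
  (forall k, (count (is_arr k) es <= 1)%N /\ (count (is_dep k) es <= 1)%N) /\
  (forall k es1 es2, es = es1 ++ Dep k :: es2 -> has (is_arr k) es1).

Definition proc_lat (b : vm) : R := 1 / (vm_mu b - theta (vm_vnf b) * Lambda b).
Definition latency (s : state) (k : nat) : R :=
  \big[Num.max/0]_(b <- s | k \in vm_jobs b) d (layer (vm_node b)) +
  \sum_(b <- s | k \in vm_jobs b) proc_lat b.
Definition feasible (s : state) (k : nat) : Prop :=
  (forall v, v \in rV (req k) ->
     exists b, List.In b s /\ k \in vm_jobs b /\ vm_vnf b = v) /\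
  (forall b, List.In b s -> k \in vm_jobs b ->
     [/\ vm_vnf b \in rV (req k), vm_mu b <= mubar,
         0 < vm_mu b - theta (vm_vnf b) * Lambda b &
         proc_lat b <= Dfair k (vm_vnf b)]) /\
  latency s k <= rD (req k).

End Model.

From HB Require Import structures.
From mathcomp Require Import all_boot all_order all_algebra.
From mathcomp Require Import zify.
Set Implicit Arguments. Unset Strict Implicit. Unset Printing Implicit Defensive.
Import Order.TTheory GRing.Theory Num.Theory.
Local Open Scope ring_scope.

(* Before its arrival no VM hosts a job of request r: placing the jobs of
   other requests and removing departing requests never adds one.  On
   arrival each job (r, v) lands on a VM b whose capability is
   theta_v Lambda(b) + 1/m, with m the smallest fair delay among the jobs of b.
   Viability (for a fresh VM, M_{r,v} <= D_r^v) keeps this capability below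
   mubar, and the processing latency on b is exactly m <= D_r^v.  All jobs sit
   at layer l*(r) and each VNF of r is placed exactly once, so the latency of r
   is at most d_{l*} + sum_v D_r^v <= D_r. *)

Lemma InP (T : eqType) (x : T) (s : seq T) : reflect (List.In x s) (x \in s).
Proof.
apply: (iffP idP); elim: s => //= y s IH; rewrite in_cons.
  by case/orP=> [/eqP->|/IH]; auto.
by case=> [->|/IH->]; rewrite ?eqxx ?orbT.
Qed.

Definition vm_tuple (R : realFieldType) (V node : finType) (b : vm R V node) :=
  (vm_node b, vm_vnf b, vm_mu b, vm_jobs b).
Definition tuple_vm (R : realFieldType) (V node : finType)
  (t : node * V * R * seq nat) : vm R V node :=
  VM t.1.1.1 t.1.1.2 t.1.2 t.2.
Lemma vm_tupleK (R : realFieldType) (V node : finType) :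
  cancel (@vm_tuple R V node) (@tuple_vm R V node).
Proof. by case. Qed.
HB.instance Definition _ (R : realFieldType) (V node : finType) :=
  Equality.copy (vm R V node) (can_type (@vm_tupleK R V node)).

Section CReShare.
Variables (R : realFieldType) (V node : finType) (theta : V -> R)
          (mubar eps lmin : R) (d : nat -> R) (layer : node -> nat)
          (req : nat -> request R V node).

Local Notation vm := (vm R V node).
Local Notation state := (state R V node).
Local Notation M := (M theta mubar req).
Local Notation Msum := (Msum theta mubar req).
Local Notation lstar_ok := (lstar_ok theta mubar d req).
Local Notation lstar := (lstar theta mubar d layer req).
Local Notation Dfair := (Dfair theta mubar d layer req).
Local Notation Lambda := (Lambda req).
Local Notation minD := (minD theta mubar d layer req).
Local Notation proc_lat := (proc_lat theta req).
Local Notation add_job := (add_job theta mubar d layer req).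
Local Notation viable := (viable theta mubar eps lmin d layer req).
Local Notation place := (place theta mubar eps lmin d layer req).
Local Notation place_all := (place_all theta mubar eps lmin d layer req).
Local Notation remove_job := (remove_job theta mubar d layer req).
Local Notation depart := (depart theta mubar d layer req).
Local Notation arrive := (arrive theta mubar eps lmin d layer req).
Local Notation run := (run theta mubar eps lmin d layer req).
Local Notation latency := (latency theta d layer req).
Local Notation feasible := (feasible theta mubar d layer req).

Lemma lstar_okP k : (exists i, lstar_ok k (layer i)) -> lstar_ok k (lstar k).
Proof.
by case=> i ok; rewrite /lstar (bigop.bigmax_eq_arg i) //; case: arg_maxnP.
Qed.

Lemma sum_Dfair k :
  lstar_ok k (lstar k) ->
  \sum_(v in rV (req k)) Dfair k v <= rD (req k) - d (lstar k).
Proof.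
rewrite /lstar_ok /Dfair -!mulr_suml -/(Msum k) => ok.
have [Msum0|Msum_neq0] := eqVneq (Msum k) 0.
  by move: ok; rewrite Msum0 !mul0r addr0 subr_ge0.
by rewrite divff // mul1r.
Qed.

Lemma minD_le_head k ks v : minD (k :: ks) v <= Dfair k v.
Proof. by rewrite /minD; elim: ks => //= k' ks IH; rewrite ge_min IH orbT. Qed.

Lemma le_minD c k ks v :
  (forall k', k' \in k :: ks -> c <= Dfair k' v) -> c <= minD (k :: ks) v.
Proof.
rewrite /minD; elim: ks => [|k' ks IH] le_c /=; first exact/le_c/mem_head.
rewrite le_min le_c ?IH // => [k'' k''_in|]; last by rewrite !inE eqxx orbT.
by apply: le_c; rewrite !inE in k''_in *; case/orP: k''_in => ->; rewrite ?orbT.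
Qed.

Lemma capability_sound b m :
  let slack := mubar - theta (vm_vnf b) * Lambda b in
  0 < slack -> 1 / slack <= m ->
  vm_mu b = theta (vm_vnf b) * Lambda b + 1 / m ->
  [/\ vm_mu b <= mubar, 0 < vm_mu b - theta (vm_vnf b) * Lambda b
    & proc_lat b = m].
Proof.
move=> slack slack_gt0 le_m; rewrite /proc_lat => ->.
have m_gt0 : 0 < m by apply: lt_le_trans le_m; rewrite div1r invr_gt0.
rewrite addrC addrK !div1r invrK invr_gt0 m_gt0 -lerBrDr; split=> //.
by rewrite -(invrK (_ - _)) lef_pV2 ?posrE ?invr_gt0 // -div1r.
Qed.

Definition sound_vm k i (b : vm) : bool :=
  [&& vm_node b == i, vm_vnf b \in rV (req k), vm_mu b <= mubar,
      0 < vm_mu b - theta (vm_vnf b) * Lambda b &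
      proc_lat b <= Dfair k (vm_vnf b)].

Lemma add_job_sound k i v b :
  v \in rV (req k) -> viable i k v b -> sound_vm k i (add_job b k).
Proof.
move=> v_req [node_b vnf_b _ slack_gt0 [le_k le_jobs]].
have Lambda_add : Lambda (add_job b k) = Lambda b + rlam (req k).
  by rewrite /Lambda big_cons addrC.
case: (@capability_sound (add_job b k) (minD (k :: vm_jobs b) v)).
- by rewrite Lambda_add /= vnf_b.
- rewrite Lambda_add /= vnf_b; apply: le_minD => k'.
  by rewrite inE => /orP[/eqP->|/le_jobs].
- by rewrite /= vnf_b.
- move=> mu_le slack_pos lat.
  rewrite /sound_vm mu_le slack_pos lat /= node_b vnf_b eqxx v_req.
  exact: minD_le_head.
Qed.

Hypothesis load_lt_mubar :
  forall k v, v \in rV (req k) -> theta v * rlam (req k) < mubar.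

Lemma M_gt0 k v : v \in rV (req k) -> 0 < M k v.
Proof. by move=> v_req; rewrite /M div1r invr_gt0 subr_gt0 load_lt_mubar. Qed.

Lemma M_le_Dfair k v :
  lstar_ok k (lstar k) -> v \in rV (req k) -> M k v <= Dfair k v.
Proof.
rewrite /lstar_ok /Dfair => ok v_req.
have M_le_Msum : M k v <= Msum k.
  rewrite /Msum (bigD1 v) //= lerDl.
  by apply: sumr_ge0 => u /andP[Hu _]; exact/ltW/M_gt0.
have Msum_gt0 : 0 < Msum k := lt_le_trans (M_gt0 v_req) M_le_Msum.
apply: le_trans (ler_wpM2l _ (_ : Msum k <= _)).
- by rewrite divfK ?gt_eqF.
- by rewrite divr_ge0 ?ltW ?M_gt0.
- by rewrite lerBrDl.
Qed.

Lemma new_vm_sound k i v :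
  lstar_ok k (lstar k) -> v \in rV (req k) ->
  sound_vm k i (VM i v (theta v * rlam (req k) + 1 / Dfair k v) [:: k]).
Proof.
move=> ok v_req; set b := VM i v _ [:: k].
have Lambda_new : Lambda b = rlam (req k) by rewrite /Lambda big_seq1.
case: (@capability_sound b (Dfair k v)).
- by rewrite Lambda_new subr_gt0 load_lt_mubar.
- by rewrite Lambda_new; exact: M_le_Dfair.
- by rewrite Lambda_new.
- move=> mu_le slack_pos lat.
  by rewrite /sound_vm mu_le slack_pos lat /= eqxx v_req lexx.
Qed.

Definition hosts k (s : state) : seq V :=
  [seq vm_vnf b | b <- s & k \in vm_jobs b].

Lemma hosts_cat k s1 s2 : hosts k (s1 ++ s2) = hosts k s1 ++ hosts k s2.
Proof. by rewrite /hosts filter_cat map_cat. Qed.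

Lemma hosts_place_other k k' v i s s' :
  k' != k -> place s k' v i s' -> hosts k s' = hosts k s.
Proof.
move=> neq_k [[s1 [b [s2 [-> [_ [_ ->]]]]]] | [_ ->]].
  rewrite !hosts_cat /hosts /= in_cons (eq_sym k) (negbTE neq_k) /=.
  by case: (k \in vm_jobs b).
by rewrite /hosts filter_rcons /= mem_seq1 (eq_sym k) (negbTE neq_k).
Qed.

Lemma hosts_place_all_other k k' i vs s s' :
  k' != k -> place_all s k' i vs s' -> hosts k s' = hosts k s.
Proof.
move=> neq_k; elim: vs s => [|v vs IH] s /=; first by move->.
by case=> s1 [/(hosts_place_other neq_k) <- /IH].
Qed.

Lemma hosts_depart k k' s :
  hosts k (depart s k') = if k' == k then [::] else hosts k s.
Proof.
rewrite /hosts /depart -filter_predI filter_map -map_comp.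
rewrite (@eq_filter _ _ (fun b => (k' != k) && (k \in vm_jobs b))) => [|b /=].
  by case: eqP => //= _; elim: s.
rewrite andb_idr => [|k_in]; first by rewrite mem_filter eq_sym.
by apply: contraTN k_in => /nilP->.
Qed.

Lemma run_hosts_nil k es s s' :
  ~~ has (is_arr k) es -> run s es s' -> hosts k s = [::] -> hosts k s' = [::].
Proof.
elim: es s => [|e es IH] s /=; first by move=> _ ->.
rewrite negb_or => /andP[not_arr_e not_arr_es] [s1 [step_e run_es]] nil_s.
apply: IH run_es _ => //; case: e not_arr_e step_e => k' /= neq_k.
  by case=> i [vs [_ [_ /(hosts_place_all_other neq_k)->]]].
by move->; rewrite hosts_depart nil_s; case: ifP.
Qed.

Lemma hosts_place k v i s s' :
  v \notin hosts k s -> place s k v i s' ->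
  perm_eq (hosts k s') (v :: hosts k s).
Proof.
move=> v_new [[s1 [b [s2 [def_s [[_ vnf_b _ _ _] [_ ->]]]]]] | [_ ->]].
  have kb : k \notin vm_jobs b.
    apply: contra v_new => kb; rewrite def_s -vnf_b.
    by apply: map_f; rewrite mem_filter kb mem_cat mem_head orbT.
  rewrite def_s !hosts_cat /hosts /= in_cons eqxx (negbTE kb) /= vnf_b.
  by rewrite -cat1s perm_catCA.
by rewrite /hosts filter_rcons /= mem_seq1 eqxx map_rcons perm_rcons.
Qed.

Lemma hosts_place_all k i vs s s' :
  uniq (vs ++ hosts k s) -> place_all s k i vs s' ->
  perm_eq (hosts k s') (vs ++ hosts k s).
Proof.
elim: vs s => [|v vs IH] s /=; first by move=> _ ->.
move=> /andP[]; rewrite mem_cat negb_or => /andP[v_notin_vs v_new] uniq_rest.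
case=> s1 [pl pa].
have perm_rest : perm_eq (vs ++ hosts k s1) (v :: vs ++ hosts k s).
  apply: (@perm_trans _ (vs ++ v :: hosts k s)).
    by rewrite perm_cat2l; exact: hosts_place v_new pl.
  by rewrite -cat1s perm_catCA.
have uniq_s1 : uniq (vs ++ hosts k s1).
  by rewrite (perm_uniq perm_rest) /= mem_cat negb_or v_notin_vs v_new.
exact: perm_trans (IH s1 uniq_s1 pa) perm_rest.
Qed.

Lemma sound_place k i v s s' :
  lstar_ok k (lstar k) -> v \in rV (req k) ->
  {in s, forall b, k \in vm_jobs b -> sound_vm k i b} -> place s k v i s' ->
  {in s', forall b, k \in vm_jobs b -> sound_vm k i b}.
Proof.
move=> ok v_req sound_s [[s1 [b [s2 [def_s [viable_b [_ ->]]]]]] | [_ ->]] b'.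
  rewrite mem_cat inE => /or3P[b'_s1|/eqP-> _|b'_s2].
  - by apply: sound_s; rewrite def_s mem_cat b'_s1.
  - exact: add_job_sound viable_b.
  - by apply: sound_s; rewrite def_s mem_cat inE b'_s2 !orbT.
rewrite mem_rcons inE => /orP[/eqP-> _|/sound_s//]; exact: new_vm_sound.
Qed.

Lemma sound_place_all k i vs s s' :
  lstar_ok k (lstar k) -> {subset vs <= rV (req k)} ->
  {in s, forall b, k \in vm_jobs b -> sound_vm k i b} ->
  place_all s k i vs s' ->
  {in s', forall b, k \in vm_jobs b -> sound_vm k i b}.
Proof.
move=> ok; elim: vs s => [|v vs IH] s sub_vs sound_s /=; first by move->.
case=> s1 [pl pa]; apply: IH pa => [u u_vs|].
  by apply: sub_vs; rewrite inE u_vs orbT.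
by apply: sound_place pl => //; apply: sub_vs; rewrite mem_head.
Qed.

Lemma latency_le k i s :
  lstar_ok k (lstar k) -> 0 <= d (lstar k) -> layer i = lstar k ->
  perm_eq (hosts k s) (enum (rV (req k))) ->
  {in s, forall b, k \in vm_jobs b -> sound_vm k i b} ->
  latency s k <= rD (req k).
Proof.
move=> ok d_ge0 layer_i hosts_s sound_s.
have max_le : \big[Num.max/0]_(b <- s | k \in vm_jobs b) d (layer (vm_node b))
              <= d (lstar k).
  rewrite big_seq_cond; apply: bigmax_le => // b /andP[b_s kb].
  by case/and5P: (sound_s b b_s kb) => /eqP-> *; rewrite layer_i.
have sum_le : \sum_(b <- s | k \in vm_jobs b) proc_lat b
              <= rD (req k) - d (lstar k).
  apply: le_trans (sum_Dfair ok); rewrite -big_enum -(perm_big _ hosts_s).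
  rewrite big_map big_filter [leLHS]big_seq_cond [leRHS]big_seq_cond.
  apply: ler_sum => b /andP[b_s kb].
  by case/and5P: (sound_s b b_s kb).
by rewrite /latency -(subrK (d (lstar k)) (rD _)) addrC lerD.
Qed.

Lemma arrival_feasible k s s' :
  lstar_ok k (lstar k) -> 0 <= d (lstar k) -> hosts k s = [::] ->
  arrive s k s' -> feasible s' k.
Proof.
move=> ok d_ge0 no_k [i [vs [layer_i [perm_vs place_vs]]]].
have uniq_vs : uniq (vs ++ hosts k s).
  by rewrite no_k cats0 (perm_uniq perm_vs) enum_uniq.
have hosts_s' : perm_eq (hosts k s') (enum (rV (req k))).
  have := hosts_place_all uniq_vs place_vs.
  by rewrite no_k cats0 => /perm_trans; apply.
have sound_s' : {in s', forall b, k \in vm_jobs b -> sound_vm k i b}.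
  apply: sound_place_all place_vs => // [v|b b_s kb].
    by rewrite (perm_mem perm_vs) mem_enum.
  suff : vm_vnf b \in hosts k s by rewrite no_k.
  by apply: map_f; rewrite mem_filter kb.
split; [|split]; last exact: latency_le hosts_s' sound_s'.
- move=> v; rewrite -mem_enum -(perm_mem hosts_s') => /mapP[b].
  by rewrite mem_filter => /andP[kb /InP b_s'] ->; exists b.
- by move=> b /InP b_s' kb; case/and5P: (sound_s' b b_s' kb) => _ *; split.
Qed.

End CReShare.

Lemma valid_schedule_arrival_once (R : realFieldType) (V node : finType)
  (req : nat -> request R V node) es1 es2 k :
  valid_schedule req (es1 ++ Arr k :: es2) -> ~~ has (is_arr k) es1.
Proof.
case=> _ [count_le _]; case: (count_le k) => arr_le _.
by move: arr_le; rewrite count_cat /= eqxx has_count; lia.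
Qed.

Theorem lemma1 (R : realFieldType) (V node : finType) (theta : V -> R)
  (mubar eps lmin : R) (d : nat -> R) (layer : node -> nat)
  (req : nat -> request R V node)
  (Heps : 0 < eps) (Hmubar : 0 < mubar) (Hlmin : 0 < lmin)
  (Htheta : forall v, 0 < theta v <= 1)
  (Hd_incr : forall l, d l < d l.+1) (Hd0 : 0 <= d 0%N)
  (Hleaf : forall k, layer (rleaf (req k)) = 0%N)
  (Hlam : forall k, lmin <= rlam (req k))
  (HM : forall k v, v \in rV (req k) -> theta v * rlam (req k) < mubar)
  (Hlstar : forall k, exists i : node,
      lstar_ok theta mubar d req k (layer i))
  (Hrange : forall k v, v \in rV (req k) ->
      exists j, in_range mubar eps lmin j (Dfair theta mubar d layer req k v))
  (sched : seq event) (Hsched : valid_schedule req sched)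
  (es1 es2 : seq event) (k : nat) (s s' : state R V node) :
  sched = es1 ++ Arr k :: es2 ->
  run theta mubar eps lmin d layer req [::] es1 s ->
  arrive theta mubar eps lmin d layer req s k s' ->
  feasible theta mubar d layer req s' k.
Proof.
move=> def_sched run_es1; subst sched.
apply: arrival_feasible => //.
- exact: lstar_okP.
- by elim: (lstar _ _ _ _ _ k) => // n d_ge0; exact: le_trans d_ge0 (ltW (Hd_incr n)).
- exact: run_hosts_nil (valid_schedule_arrival_once Hsched) run_es1 _.
Qed.
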